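(* Let $y$ be a non-empty word of length $n$ over a totally ordered alphabet. Algorithm LyndonSuffixTable (described in the context) terminates and returns the Lyndon suffix table of $y$, i.e. for every $j\in\{0,\dots,n-1\}$ its output satisfies $\mathrm{lyns}[j]=$ the length of the longest suffix of $y[0\,..\,j]$ that is a Lyndon word. It runs in time $O(n)$ and accesses letters of $y$ only through letter comparisons.
   Context: Lexicographic order $<$: $u<v$ if $u$ is a proper prefix of $v$, or $u=ras$, $v=rbt$ with letters $a<b$. A Lyndon word is a non-empty word strictly smaller than each of its proper non-empty suffixes. $y[i\,..\,j]$ denotes $y[i]\cdots y[j]$. Algorithm LyndonSuffixTable (input: non-empty word $y$ of length $n$): lyns[0] ← 1; per ← 1; h ← 0; i ← 0; j ← 1. While j < n: if y[j] < y[i] then { h ← j − (i − h); lyns[h] ← 1; per ← 1; i ← h; j ← h+1 } else if y[j] > y[i] then { lyns[j] ← j − h + 1; j ← j+1; per ← j − h; i ← h } else { lyns[j] ← lyns[i]; i ← h + ((i − h + 1) mod per); j ← j+1 }. Return lyns. *)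

From mathcomp Require Import all_boot all_order.
Set Implicit Arguments. Unset Strict Implicit. Unset Printing Implicit Defensive.
Import Order.TTheory.
Local Open Scope order_scope.

Section Words.
Context {disp : Order.disp_t} {T : orderType disp}.

Fixpoint lex_lt (u v : seq T) : bool :=
  match u, v with
  | [::], _ :: _ => true
  | _, [::] => false
  | a :: u', b :: v' => (a < b) || ((a == b) && lex_lt u' v')
  end.

Definition lyndon (w : seq T) : bool :=
  (w != [::]) && all (fun k => lex_lt w (drop k w)) (iota 1 (size w).-1).

Definition longest_lyndon_suffix (x : seq T) : nat :=
  \max_(k < (size x).+1 | lyndon (drop (size x - k) x)) k.

(* The only access to the letters of y: the comparison of y[a] with y[b]. *)
Definition letter_cmp (y : seq T) (a b : nat) : comparison :=
  match y with
  | [::] => Eq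
  | x0 :: _ =>
    if nth x0 y a < nth x0 y b then Lt
    else if nth x0 y a == nth x0 y b then Eq else Gt
  end.
End Words.

Record lst_state := LstState {
  st_lyns : nat -> nat; st_per : nat; st_h : nat; st_i : nat; st_j : nat }.

Definition upd (f : nat -> nat) (x v : nat) : nat -> nat :=
  fun z => if z == x then v else f z.

(* lyns[0] <- 1; per <- 1; h <- 0; i <- 0; j <- 1 (other entries unset, here 0). *)
Definition lst_init : lst_state := LstState (upd (fun _ => 0) 0 1) 1 0 0 1.

(* One iteration of the while-loop body; the algorithm sees the word only
   through the comparison oracle [cmp a b] = comparison of y[a] with y[b]. *)
Definition lst_step (cmp : nat -> nat -> comparison) (s : lst_state) : lst_state :=
  let: LstState lyns per h i j := s in
  match cmp j i with
  | Lt => let h' := j - (i - h) in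
          LstState (upd lyns h' 1) 1 h' h' h'.+1
  | Gt => let lyns' := upd lyns j (j - h + 1) in
          let j' := j.+1 in
          LstState lyns' (j' - h) h h j'
  | Eq => LstState (upd lyns j (lyns i)) per h (h + ((i - h + 1) %% per)) j.+1
  end.

Definition lst_halted (n : nat) (s : lst_state) : bool := n <= st_j s.

Definition lst_iter (cmp : nat -> nat -> comparison) (k : nat) : lst_state :=
  iter k (lst_step cmp) lst_init.

From mathcomp Require Import all_boot all_order.
From mathcomp Require Import zify.
Set Implicit Arguments. Unset Strict Implicit. Unset Printing Implicit Defensive.
Import Order.TTheory.

(* The loop keeps the following invariant on its state (lyns, per, h, i, j):
   y[h..j-1] has period per, contains a full copy of the Lyndon word
   w = y[h..h+per-1], and i is the position of the first period facing j;
   no Lyndon factor of y starts before h and ends at or after h; and lyns[m]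
   is the longest Lyndon suffix of y[0..m] for every m < j.  Comparing y[j]
   with y[i] has three outcomes:
   - y[j] > y[i]: y[h..j] is itself a Lyndon word and becomes the new period;
   - y[j] = y[i]: the periodic run is extended, and the longest Lyndon suffix
     of y[0..j] is that of y[0..i] shifted by a multiple of per;
   - y[j] < y[i]: no Lyndon factor crosses the last period boundary h' <= j,
     so the scan restarts at h'.
   The combinatorial core is [not_lyndon_crossing]: a factor starting inside
   the run and extending past a period boundary, beyond which the text falls
   below the powers of w, has a smaller suffix and is therefore not Lyndon.
   Each iteration increases j + h < 2n, so the loop stops within 2n steps. *)

Section Words.
Context {d : Order.disp_t} {T : orderType d}.

Lemma lex_lt_witness (x0 : T) (u v : seq T) t :
  t <= size u -> t < size v -> (forall s, s < t -> nth x0 u s = nth x0 v s) ->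
  (t = size u \/ (nth x0 u t < nth x0 v t)%O) -> lex_lt u v.
Proof.
elim: u v t => [|a u IH] [|b v] [|t] //=; rewrite ?ltnS => Ht Hv Hagree Hend.
- by case: Hend => // ->.
- apply/orP; right; apply/andP; split; first by apply/eqP; apply: (Hagree 0).
  apply: (IH v t) => // [s Hs|]; first by apply: (Hagree s.+1).
  by case: Hend => [[->]|]; [left|right].
Qed.

Lemma lex_lt_asym (u v : seq T) : lex_lt u v -> ~~ lex_lt v u.
Proof.
elim: u v => [|a u IH] [|b v] //=.
case/orP => [Hab|/andP[/eqP-> H]].
- by rewrite lt_gtF //= (gt_eqF Hab).
- by rewrite ltxx eqxx /= IH.
Qed.

Lemma lyndon_letter (w : seq T) : size w = 1 -> lyndon w.
Proof. by case: w => [|a [|]]. Qed.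

Lemma longest_lyndon_suffixE (x : seq T) L :
  L <= size x -> lyndon (drop (size x - L) x) ->
  (forall k, L < k -> k <= size x -> ~~ lyndon (drop (size x - k) x)) ->
  longest_lyndon_suffix x = L.
Proof.
move=> HL Hlyn Hmax; apply/eqP; rewrite eqn_leq; apply/andP; split.
  apply/bigmax_leqP => k Pk; rewrite leqNgt; apply/negP => Hk.
  by move/negP: (Hmax k Hk (ltn_ord k)).
have HL' : L < (size x).+1 by [].
exact: (leq_bigmax_cond (Ordinal HL') Hlyn).
Qed.

(* A non-empty word has a longest Lyndon suffix (its last letter is one). *)
Lemma longest_lyndon_suffixP (x : seq T) : 0 < size x ->
  exists L, [/\ longest_lyndon_suffix x = L, L <= size x,
     lyndon (drop (size x - L) x) &
     forall k, L < k -> k <= size x -> ~~ lyndon (drop (size x - k) x)].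
Proof.
move=> Hx; have H1 : 1 < (size x).+1 by [].
have P1 : lyndon (drop (size x - Ordinal H1) x).
  by apply: lyndon_letter; rewrite size_drop /=; lia.
rewrite /longest_lyndon_suffix (bigop.bigmax_eq_arg (Ordinal H1)) //.
case: arg_maxnP => // k Pk Hmax.
exists k; split => //; first by rewrite -ltnS.
move=> k' Hk' Hk'x; apply/negP => Pk'.
have Hk'' : k' < (size x).+1 by [].
by move: (Hmax (Ordinal Hk'') Pk') => /= H; lia.
Qed.

Section Factors.
Variables (x0 : T) (y : seq T).
Local Notation letter := (nth x0 y).

Definition factor p m := drop p (take m.+1 y).

Lemma nth_factor p m s : p + s <= m -> nth x0 (factor p m) s = letter (p + s).
Proof. by move=> H; rewrite /factor nth_drop nth_take // ltnS. Qed.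

Lemma size_factor p m : m < size y -> size (factor p m) = m.+1 - p.
Proof. by move=> H; rewrite /factor size_drop size_takel. Qed.

Lemma drop_factor p m k : drop k (factor p m) = factor (p + k) m.
Proof. by rewrite /factor drop_drop addnC. Qed.

Lemma factor_lt_witness p q m t :
  p <= m -> q <= m -> m < size y ->
  (forall s, s < t -> letter (q + s) = letter (p + s)) ->
  (q + t = m.+1 /\ p < q) \/
    [/\ q + t <= m, p + t <= m & (letter (q + t) < letter (p + t))%O] ->
  lex_lt (factor q m) (factor p m).
Proof.
move=> Hp Hq Hm Hagree Hend; apply: (lex_lt_witness (x0 := x0) (t := t)).
- rewrite size_factor //; case: Hend => [[]|[]]; lia.
- rewrite size_factor //; case: Hend => [[]|[]]; lia.
- move=> s Hs; rewrite !nth_factor ?Hagree //; case: Hend => [[]|[]]; lia.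
- case: Hend => [[H1 H2]|[H1 H2 H3]]; [left|right].
  + rewrite size_factor //; lia.
  + by rewrite !nth_factor.
Qed.

Lemma factor_lt_via_reference p q r m tp tq :
  p < q -> q <= m -> m < size y ->
  (forall x, x < tq -> letter (q + x) = letter (r + x)) ->
  q + tq = m.+1 \/ q + tq <= m /\ (letter (q + tq) < letter (r + tq))%O ->
  (forall x, x < tp -> letter (p + x) = letter (r + x)) ->
  (tp <= tq -> tp < tq \/ q + tq <= m ->
     p + tp <= m /\ (letter (r + tp) < letter (p + tp))%O) ->
  lex_lt (factor q m) (factor p m).
Proof.
move=> Hpq Hqm Hm Hq_agree Hq_stop Hp_agree Hp_beat.
case: (leqP tq tp) => Htq.
- apply: (factor_lt_witness (t := tq)); try lia.
    by move=> s Hs; rewrite Hq_agree ?Hp_agree //; lia.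
  case: Hq_stop => [Hend|[Hin Hlt]]; [by left; split; lia|right; split; try lia].
  case: (ltngtP tq tp) Htq => [Hlt' _|//|Heq _]; first by rewrite Hp_agree.
  rewrite -Heq in Hp_beat; have [_ Hbeat] := Hp_beat (leqnn _) (or_intror Hin).
  exact: lt_trans Hlt Hbeat.
- have [Hpm Hbeat] := Hp_beat (ltnW Htq) (or_introl Htq).
  apply: (factor_lt_witness (t := tp)); try lia.
    by move=> s Hs; rewrite Hq_agree ?Hp_agree //; lia.
  right; split => //; first by case: Hq_stop => [|[]]; lia.
  by rewrite Hq_agree.
Qed.

Lemma not_lyndon_of_smaller_suffix p q m :
  p < q -> q <= m -> m < size y -> lex_lt (factor q m) (factor p m) ->
  ~~ lyndon (factor p m).
Proof.
move=> Hpq Hq Hm Hlt; apply/negP => /andP[_ /allP Hall].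
have: q - p \in iota 1 (size (factor p m)).-1.
  rewrite mem_iota size_factor //; lia.
move/Hall; rewrite drop_factor subnKC ?(ltnW Hpq) // => H.
by move: (lex_lt_asym Hlt); rewrite H.
Qed.

Definition lyndon_witnessed a L :=
  forall r, 0 < r -> r < L -> exists t, [/\ t < L - r,
    forall s, s < t -> letter (a + r + s) = letter (a + s) &
    (letter (a + t) < letter (a + r + t))%O].

Lemma lyndon_witnessed_lyndon a L :
  lyndon_witnessed a L -> 0 < L -> a + L <= size y -> lyndon (factor a (a + L).-1).
Proof.
move=> Hwit HL0 Hn; apply/andP; split.
  by rewrite -size_eq0 size_factor; lia.
apply/allP => k; rewrite mem_iota size_factor; last lia.
move=> Hk; rewrite drop_factor.
have [t [Ht Hagree Hlt]] := Hwit k ltac:(lia) ltac:(lia).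
apply: (lex_lt_witness (x0 := x0) (t := t)); rewrite ?size_factor; try lia.
  by move=> s Hs; rewrite !nth_factor ?Hagree //; lia.
by right; rewrite !nth_factor; try lia.
Qed.

Lemma lls_prefixE m p :
  m < size y -> p <= m -> lyndon (factor p m) ->
  (forall p', p' < p -> ~~ lyndon (factor p' m)) ->
  longest_lyndon_suffix (take m.+1 y) = m.+1 - p.
Proof.
move=> Hm Hp Hlyn Hmin; have Hs : size (take m.+1 y) = m.+1 by rewrite size_takel.
apply: longest_lyndon_suffixE; rewrite Hs.
- lia.
- by rewrite subKn; [exact: Hlyn | lia].
- by move=> k Hk Hkx; apply: Hmin; lia.
Qed.

Lemma lls_prefixP m :
  m < size y -> exists p, [/\ p <= m, lyndon (factor p m),
    (forall p', p' < p -> ~~ lyndon (factor p' m)) &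
    longest_lyndon_suffix (take m.+1 y) = m.+1 - p].
Proof.
move=> Hm; have Hs : size (take m.+1 y) = m.+1 by rewrite size_takel.
have [L [-> HLx Hlyn Hmax]] := longest_lyndon_suffixP (ltac:(lia) : 0 < size (take m.+1 y)).
rewrite Hs in HLx Hlyn Hmax.
have HL0 : 0 < L.
  rewrite lt0n; apply/eqP => L0; move: Hlyn; rewrite L0 subn0.
  by rewrite -{1}Hs drop_size.
exists (m.+1 - L); split; [lia | exact: Hlyn | | lia].
move=> p' Hp'; have := Hmax (m.+1 - p'); rewrite subKn; last lia.
by apply; lia.
Qed.

Definition periodic h per j :=
  forall q, h <= q -> q + per < j -> letter (q + per) = letter q.

Lemma periodic_shift h per j : periodic h per j ->
  forall b q, h <= q -> q + b * per < j -> letter (q + b * per) = letter q.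
Proof.
move=> Hrun; elim=> [|b IH] q Hq Hj; first by rewrite mul0n addn0.
rewrite mulSn (addnC per) addnA Hrun; first (apply: IH => //); lia.
Qed.

Lemma periodic_mod h per j : 0 < per -> periodic h per j ->
  forall q, h <= q -> q < j -> letter q = letter (h + (q - h) %% per).
Proof.
move=> Hper Hrun q Hq Hj.
have E : q - h = (q - h) %/ per * per + (q - h) %% per := divn_eq _ _.
have := periodic_shift Hrun (b := (q - h) %/ per) (q := h + (q - h) %% per).
move: E; move: ((q - h) %/ per * per) => D; move: ((q - h) %% per) => M E.
have -> : h + M + D = q by lia.
by move=> -> //; lia.
Qed.

Lemma not_lyndon_crossing h per j a p m tq :
  0 < per -> periodic h per j -> lyndon_witnessed h per ->
  h + a * per <= j -> h <= p -> p < h + a * per -> h + a * per <= m -> m < size y ->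
  (forall s, s < tq -> letter (h + a * per + s) = letter (h + s)) -> tq <= per ->
  h + a * per + tq = m.+1 \/
    [/\ tq < per, h + a * per + tq <= m & (letter (h + a * per + tq) < letter (h + tq))%O] ->
  ~~ lyndon (factor p m).
Proof.
move=> Hper Hrun Hwit Hj Hp Hpq Hqm Hm Hq_agree Htq Hq_stop.
set q := h + a * per in Hj Hpq Hqm Hq_agree Hq_stop.
apply: (not_lyndon_of_smaller_suffix (q := q)) => //.
have Hdiv : p - h = (p - h) %/ per * per + (p - h) %% per := divn_eq _ _.
set b := (p - h) %/ per in Hdiv; set r0 := (p - h) %% per in Hdiv.
have Hr0 : r0 < per by apply: ltn_pmod.
have Hb : b * per + per <= a * per.
  have : b * per < a * per by lia.
  rewrite ltn_mul2r => /andP[_ Hba].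
  by rewrite -mulSnr leq_mul2r Hba orbT.
have Hp_period x : r0 + x < per -> letter (p + x) = letter (h + r0 + x).
  move=> Hx; have -> : p + x = (h + r0 + x) + b * per by lia.
  by apply: (periodic_shift Hrun); lia.
have Hq_stop' : q + tq = m.+1 \/ q + tq <= m /\ (letter (q + tq) < letter (h + tq))%O.
  by case: Hq_stop => [|[]]; [left|right].
case: (posnP r0) => Hr00.
- apply: (factor_lt_via_reference (r := h) (tp := per) (tq := tq)) => //.
  + by move=> x Hx; rewrite Hp_period Hr00 ?addn0.
  + by move=> Hle; case: Hq_stop => [|[]]; lia.
- have [t0 [Ht0 Hagree0 Hlt0]] := Hwit r0 Hr00 Hr0.
  apply: (factor_lt_via_reference (r := h) (tp := t0) (tq := tq)) => //.
  + by move=> x Hx; rewrite Hp_period ?Hagree0 //; lia.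
  + by move=> _ _; split; [lia | rewrite Hp_period //; lia].
Qed.

End Factors.
End Words.

Record invariant {d} {T : orderType d} (x0 : T) (y : seq T) (s : lst_state) : Prop :=
  Invariant {
  inv_j_le : st_j s <= size y;
  inv_per_pos : 0 < st_per s;
  inv_h_le_i : st_h s <= st_i s;
  inv_i_lt : st_i s < st_h s + st_per s;
  inv_j_i : exists a, 0 < a /\ st_j s = st_i s + a * st_per s;
  inv_periodic : periodic x0 y (st_h s) (st_per s) (st_j s);
  inv_lyndon : lyndon_witnessed x0 y (st_h s) (st_per s);
  inv_before_h : forall p m, p < st_h s -> st_h s <= m -> m < size y ->
    ~~ lyndon (factor y p m);
  inv_table : forall m, m < st_j s ->
    st_lyns s m = longest_lyndon_suffix (take m.+1 y)
}.

Lemma invariant_init {d} {T : orderType d} (x0 : T) (y : seq T) :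
  0 < size y -> invariant x0 y lst_init.
Proof.
move=> Hn; constructor => //=.
- by exists 1.
- by move=> q; lia.
- by move=> r; lia.
- move=> m; rewrite ltnS leqn0 => /eqP ->.
  rewrite (lls_prefixE (p := 0)) //.
  by apply: lyndon_letter; rewrite size_factor.
Qed.

Section LoopBody.
Context {d : Order.disp_t} {T : orderType d}.
Variables (x0 : T) (y : seq T) (lyns : nat -> nat) (per h i j a : nat).
Local Notation letter := (nth x0 y).
Hypotheses (Hj : j < size y) (Hper : 0 < per) (Hhi : h <= i) (Hih : i < h + per).
Hypotheses (Ha : 0 < a) (Hja : j = i + a * per).
Hypotheses (Hrun : periodic x0 y h per j) (Hwit : lyndon_witnessed x0 y h per).
Hypothesis Hbefore :
  forall p m, p < h -> h <= m -> m < size y -> ~~ lyndon (factor y p m).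
Hypothesis Htable : forall m, m < j -> lyns m = longest_lyndon_suffix (take m.+1 y).

Lemma offset_j : (j - h) %% per = i - h.
Proof.
have -> : j - h = a * per + (i - h) by lia.
by rewrite modnMDl modn_small //; lia.
Qed.

(* Branch y[j] < y[i]: the text from the last period boundary h + a * per
   falls below the period at j, so no Lyndon factor crosses that boundary. *)
Lemma before_boundary_lt : (letter j < letter i)%O ->
  forall p m, p < h + a * per -> h + a * per <= m -> m < size y ->
  ~~ lyndon (factor y p m).
Proof.
move=> Hc p m Hp Hm Hmn; case: (ltnP p h) => Hph; first by apply: Hbefore; lia.
have Hagree s : h + a * per + s < j -> letter (h + a * per + s) = letter (h + s).
  by move=> Hs; rewrite addnAC; apply: (periodic_shift Hrun); lia.
case: (ltnP m j) => Hmj.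
- apply: (not_lyndon_crossing (a := a) (tq := m.+1 - (h + a * per)) Hper Hrun Hwit);
    try lia.
  by move=> s Hs; apply: Hagree; lia.
- apply: (not_lyndon_crossing (a := a) (tq := i - h) Hper Hrun Hwit); try lia.
  + by move=> s Hs; apply: Hagree; lia.
  + right; split; try lia.
    have -> : h + a * per + (i - h) = j by lia.
    by rewrite subnKC.
Qed.

Lemma step_lt : (letter j < letter i)%O ->
  invariant x0 y (LstState (upd lyns (j - (i - h)) 1) 1
                           (j - (i - h)) (j - (i - h)) (j - (i - h)).+1).
Proof.
move=> Hc; have Hbefore' := before_boundary_lt Hc.
have Eh' : h + a * per = j - (i - h) by lia.
rewrite Eh' in Hbefore'.
constructor => /=; try lia.
- by exists 1; split => //; lia.
- by move=> q; lia.
- by move=> r; lia.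
- exact: Hbefore'.
- move=> m Hm; rewrite /upd; case: eqP => [->|Hne]; last by apply: Htable; lia.
  rewrite (lls_prefixE (p := j - (i - h))) ?subSnn //; try lia.
  + by apply: lyndon_letter; rewrite size_factor; lia.
  + by move=> p' Hp'; apply: Hbefore'; lia.
Qed.

(* A shift r of it faces
   either a shift r0 > 0 of the period, which exceeds w inside w, or (r0 = 0)
   the start of w, and then the first difference is at j, where y[j] > y[i]. *)
Lemma lyndon_extend_gt : (letter i < letter j)%O -> lyndon_witnessed x0 y h (j.+1 - h).
Proof.
move=> Hc r Hr0 Hr.
have Hmod := periodic_mod Hper Hrun.
have E := divn_eq r per.
have Hr0lt : r %% per < per := ltn_pmod _ Hper.
move: (r %/ per) (r %% per) E Hr0lt => b r0 E Hr0lt.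
have Hshift x : r0 + x < per -> h + r + x < j ->
    letter (h + r + x) = letter (h + r0 + x).
  move=> Hx Hx'; have -> : h + r + x = (h + r0 + x) + b * per by lia.
  by apply: (periodic_shift Hrun); lia.
case: (posnP r0) => Hr00.
- exists (j - h - r); split; first lia.
  + move=> s Hs; rewrite (Hmod (h + r + s)) ?(Hmod (h + s)); try lia.
    have -> : h + r + s - h = b * per + s by lia.
    by rewrite modnMDl; have -> : h + s - h = s by lia.
  + have -> : h + r + (j - h - r) = j by lia.
    rewrite (Hmod (h + (j - h - r))); try lia.
    have -> : h + (j - h - r) - h = j - h - r by lia.
    have -> : (j - h - r) %% per = i - h.
      have Hx : (b * per + (j - h - r)) %% per = i - h.
        by rewrite -offset_j; congr (_ %% _); lia.
      by rewrite modnMDl in Hx.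
    by have -> : h + (i - h) = i by lia.
- have [t0 [Ht0 Hagree0 Hlt0]] := @Hwit r0 Hr00 Hr0lt.
  case: (ltnP (h + r + t0) j) => Hc2.
  + exists t0; split; first lia.
    * by move=> s Hs; rewrite Hshift; try lia; exact: Hagree0.
    * by rewrite Hshift //; lia.
  + exists (j - (h + r)); split; first lia.
    * by move=> s Hs; rewrite Hshift ?Hagree0 //; lia.
    * set t := j - (h + r).
      have Eit : i = h + r0 + t.
        have : (j - h) %% per = r0 + t.
          have -> : j - h = b * per + (r0 + t) by lia.
          by rewrite modnMDl modn_small //; lia.
        by rewrite offset_j; lia.
      have -> : h + r + t = j by lia.
      case: (ltngtP t t0) => Htt.
      -- by rewrite -(Hagree0 t Htt) -Eit.
      -- lia.
      -- by rewrite Htt; apply: lt_trans Hlt0 _; rewrite -Htt -Eit.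
Qed.

Lemma step_gt : (letter i < letter j)%O ->
  invariant x0 y (LstState (upd lyns j (j - h + 1)) (j.+1 - h) h h j.+1).
Proof.
move=> Hc; have Hwit' := lyndon_extend_gt Hc.
constructor => /=; try lia.
- by exists 1; split => //; lia.
- by move=> q; lia.
- exact: Hwit'.
- exact: Hbefore.
- move=> m Hm; rewrite /upd; case: eqP => [->|Hne]; last by apply: Htable; lia.
  rewrite (lls_prefixE (p := h)); try lia.
  + have := lyndon_witnessed_lyndon Hwit'.
    have -> : (h + (j.+1 - h)).-1 = j by lia.
    by apply; lia.
  + by move=> p' Hp'; apply: Hbefore; lia.
Qed.

Lemma factor_shift_eq : letter j = letter i ->
  forall q, h <= q -> q <= i -> factor y (q + a * per) j = factor y q i.
Proof.
move=> Hc q Hq Hqi; apply: (@eq_from_nth _ x0).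
  by rewrite !size_factor; lia.
move=> s; rewrite size_factor; last lia.
move=> Hs; rewrite !nth_factor; try lia.
case: (ltnP (q + s) i) => Hqs.
- by rewrite addnAC; apply: (periodic_shift Hrun); lia.
- have -> : q + a * per + s = j by lia.
  by have -> : q + s = i by lia.
Qed.

(* Branch y[j] = y[i]: the longest Lyndon suffix of y[0..j] is the shift of
   that of y[0..i]; longer candidates either cross the boundary h + a * per
   (excluded by the crossing lemma) or are shifts of non-Lyndon factors. *)
Lemma lls_extend_eq : letter j = letter i ->
  longest_lyndon_suffix (take j.+1 y) = longest_lyndon_suffix (take i.+1 y).
Proof.
move=> Hc; have Hi : i < size y by lia.
have [p [Hp Hlyn Hmin ->]] := lls_prefixP Hi.
have Hhp : h <= p.
  rewrite leqNgt; apply/negP => Hph.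
  by move: (@Hbefore p i Hph Hhi Hi); rewrite Hlyn.
rewrite (lls_prefixE (p := p + a * per)); try lia.
- by rewrite (factor_shift_eq Hc).
- move=> p' Hp'; case: (ltnP p' h) => Hp'h; first by apply: Hbefore; lia.
  case: (ltnP p' (h + a * per)) => Hp'q.
  + apply: (not_lyndon_crossing (a := a) (tq := (i - h).+1) Hper Hrun Hwit); try lia.
    * move=> s Hs; case: (ltnP s (i - h)) => Hsi.
      -- by rewrite addnAC; apply: (periodic_shift Hrun); lia.
      -- have -> : h + a * per + s = j by lia.
         by have -> : h + s = i by lia.
  + have -> : p' = (p' - a * per) + a * per by lia.
    rewrite (factor_shift_eq Hc); try lia.
    by apply: Hmin; lia.
Qed.

Lemma step_eq : letter j = letter i ->
  invariant x0 y (LstState (upd lyns j (lyns i)) per h (h + (i - h + 1) %% per) j.+1).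
Proof.
move=> Hc.
have Hnext : (h + (i - h + 1) %% per = i.+1 /\ i.+1 < h + per) \/
             (h + (i - h + 1) %% per = h /\ i.+1 = h + per).
  case: (ltngtP (i - h + 1) per) => H.
  + by left; rewrite modn_small //; lia.
  + lia.
  + by right; rewrite H modnn; lia.
constructor => /=; try lia.
- case: Hnext => [[-> _]|[-> H]].
  + by exists a; split => //; lia.
  + by exists a.+1; split => //; rewrite mulSnr; lia.
- move=> q Hq Hq'; case: (ltnP (q + per) j) => Hqj; first exact: Hrun.
  have -> : q + per = j by lia.
  rewrite Hc (periodic_mod Hper Hrun (q := q)); try lia.
  have -> : (q - h) %% per = i - h.
    by rewrite -offset_j -(modnDr (q - h)); congr (_ %% _); lia.
  by congr nth; lia.
- exact: Hwit.
- exact: Hbefore.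
- move=> m Hm; rewrite /upd; case: eqP => [->|Hne]; last by apply: Htable; lia.
  by rewrite (lls_extend_eq Hc) Htable //; lia.
Qed.

End LoopBody.

Lemma invariant_step {d} {T : orderType d} (x0 : T) (y : seq T) cmp s :
  (forall a b, a < size y -> b < size y -> cmp a b =
     if (nth x0 y a < nth x0 y b)%O then Lt
     else if nth x0 y a == nth x0 y b then Eq else Gt) ->
  invariant x0 y s -> st_j s < size y ->
  invariant x0 y (lst_step cmp s) /\
  st_j s + st_h s < st_j (lst_step cmp s) + st_h (lst_step cmp s).
Proof.
move=> Hcmp; case: s => lyns per h i j
  [/= Hjn Hper Hhi Hih [a [Ha Hja]] Hrun Hwit Hbefore Htable] Hj.
have Hap : per <= a * per by rewrite leq_pmull.
rewrite /lst_step Hcmp //; last lia.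
case: (ltgtP (nth x0 y j) (nth x0 y i)) => Hc; split; rewrite /=; try lia.
- by apply: (step_lt (per := per) (i := i) (a := a)).
- by apply: (step_gt (per := per) (i := i) (a := a)).
- by apply: (step_eq (per := per) (i := i) (a := a)).
Qed.

(* The invariant bounds the measure: h <= i < j <= n. *)
Lemma invariant_measure {d} {T : orderType d} (x0 : T) (y : seq T) s :
  invariant x0 y s -> st_j s + st_h s < 2 * size y.
Proof.
case: s => lyns per h i j [/= Hjn Hper Hhi Hih [a [Ha Hja]] _ _ _ _].
have : per <= a * per by rewrite leq_pmull.
lia.
Qed.

Lemma first_hit (P : nat -> bool) N :
  (exists k, [/\ k <= N, P k & forall k', k' < k -> ~~ P k']) \/
  (forall k, k <= N -> ~~ P k).
Proof.
elim: N => [|N [[k [Hk Pk Hfirst]]|IH]].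
- case P0: (P 0); [left; exists 0; split => // | right => k].
  by rewrite leqn0 => /eqP ->; rewrite P0.
- by left; exists k; split => //; apply: leqW.
- case PN: (P N.+1).
  + by left; exists N.+1; split => // k' Hk'; apply: IH; lia.
  + right => k; rewrite leq_eqVlt => /orP[/eqP ->|Hk]; first by rewrite PN.
    exact: IH.
Qed.

Lemma run_invariant {d} {T : orderType d} (x0 : T) (y' : seq T) k :
  let y := x0 :: y' in
  (forall k', k' < k -> ~~ lst_halted (size y) (lst_iter (letter_cmp y) k')) ->
  invariant x0 y (lst_iter (letter_cmp y) k) /\
  k < st_j (lst_iter (letter_cmp y) k) + st_h (lst_iter (letter_cmp y) k).
Proof.
move=> y; elim: k => [|k IH] Hrunning; first by split => //; apply: invariant_init.
have [Hinv Hk] := IH (fun k' Hk' => Hrunning k' (ltnW Hk')).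
have Hj := Hrunning k (ltnSn k); rewrite /lst_halted -ltnNge in Hj.
rewrite /lst_iter iterS -/(lst_iter _ k).
have [Hinv' Hk'] := invariant_step (cmp := letter_cmp y) (fun a b _ _ => erefl) Hinv Hj.
by split => //; lia.
Qed.

Theorem proposition5 :
  exists c : nat,
  forall (d : Order.disp_t) (T : orderType d) (y : seq T),
    0 < size y ->
    exists k : nat,
      [/\ k <= c * size y,
          (forall k', k' < k -> ~~ lst_halted (size y) (lst_iter (letter_cmp y) k')),
          lst_halted (size y) (lst_iter (letter_cmp y) k) &
          forall j, j < size y ->
            st_lyns (lst_iter (letter_cmp y) k) j
            = longest_lyndon_suffix (take j.+1 y)].
Proof.
exists 2 => d T [|x0 y'] // _; set y := x0 :: y'.
have [[k [Hk Hhalt Hfirst]]|Hnever] :=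
  first_hit (fun k => lst_halted (size y) (lst_iter (letter_cmp y) k)) (2 * size y).
- have [Hinv _] := run_invariant Hfirst.
  exists k; split => // j Hj; apply: (inv_table Hinv).
  by move: Hhalt; rewrite -/y /lst_halted leEnat; lia.
- have [Hinv Hk] := run_invariant (k := 2 * size y) (fun k' Hk' => Hnever k' (ltnW Hk')).
  by move: Hk (invariant_measure Hinv); rewrite -/y; lia.
Qed.
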